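(* For every $m \in \mathbb{N}$, the $m$-uniform hypergraph $\mathcal{H}_m = (V, \mathcal{E}_s \cup \mathcal{E}_p)$ defined below admits no polychromatic coloring with $2$ colors, i.e., for every coloring $\phi\colon V \to \{\text{red},\text{blue}\}$ some hyperedge of $\mathcal{H}_m$ is monochromatic.
   Context: Construction of $\mathcal{H}_m$: first a rooted forest $F_m$ with $m^m$ trees is built, whose vertices are partitioned into ''stages''; each stage $S$ carries a total order $<_S$, and all vertices of a stage have the same distance $j$ (the level of $S$) to the root of their tree; a stage on level $j \in \{0,\dots,m-1\}$ has $m^{m-j}$ vertices. Start with $m^m$ roots, which form the unique stage on level $0$, ordered in an arbitrary fixed way. Then, for every already defined stage $S$ on level $j < m-1$ and every subset $S' \subseteq S$ with $|S'| = m^{m-j-1}$, add a new stage $T(S')$ on level $j+1$ consisting of $m^{m-j-1}$ new vertices such that every vertex of $S'$ gets exactly one child from $T(S')$, and order $T(S')$ by $<_{T(S')}$ as their parents are ordered by $<_S$. The hypergraph $\mathcal{H}_m$ has vertex set $V = V(F_m)$ and two kinds of hyperedges: stage-hyperedges $\mathcal{E}_s$, namely for every stage $S$ each set of $m$ consecutive vertices in $<_S$; and path-hyperedges $\mathcal{E}_p$, namely the vertex set of every root-to-leaf path in $F_m$ (leaves are on level $m-1$). A $2$-coloring is polychromatic if every hyperedge contains vertices of both colors. *)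

From mathcomp Require Import all_boot.
Set Implicit Arguments. Unset Strict Implicit. Unset Printing Implicit Defensive.

(* A stage on level j is encoded by the list [A_0; ...; A_{j-1}] of the choices
   made to create it: the unique level-0 stage is [::]; its m^m vertices are
   indexed 0,...,m^m-1 in the order <_S.  If a stage S on level i is encoded by
   s (and has m^(m-i) vertices, indexed 0.. in the order <_S), then for a subset
   S' of S of size m^(m-i-1), given as the strictly increasing list A of the
   indices of its elements, the new stage T(S') is encoded by rcons s A; its
   k-th vertex (in the order <_T(S')) is the child of the k-th element of S',
   i.e. of the vertex with index nth 0 A k of S. *)

Definition stage_code := seq (seq nat).
Definition vert := (stage_code * nat)%type.

Definition valid_stage (m : nat) (s : stage_code) : bool :=
  (size s <= m.-1) &&
  all (fun i => let A := nth [::] s i in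
                [&& sorted ltn A, all (fun a => a < m ^ (m - i)) A
                  & size A == m ^ (m - i.+1)])
      (iota 0 (size s)).

Definition vertex (m : nat) (v : vert) : bool :=
  valid_stage m v.1 && (v.2 < m ^ (m - size v.1)).

(* the list of ancestors (including itself) of the vertex (rev r, k) *)
Fixpoint anc (r : stage_code) (k : nat) : seq vert :=
  match r with
  | [::] => [:: ([::], k)]
  | A :: r' => (rev r, k) :: anc r' (nth 0 A k)
  end.

Definition root_path (v : vert) : seq vert := anc (rev v.1) v.2.

Definition stage_edge (m : nat) (e : seq vert) : Prop :=
  exists (s : stage_code) (i : nat),
    [/\ valid_stage m s, i + m <= m ^ (m - size s)
      & e = [seq (s, i + a) | a <- iota 0 m]].

Definition path_edge (m : nat) (e : seq vert) : Prop :=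
  exists v : vert, [/\ vertex m v, size v.1 = m.-1 & e = root_path v].

Definition hyperedge (m : nat) (e : seq vert) : Prop :=
  stage_edge m e \/ path_edge m e.

(* a 2-coloring (true = red, false = blue) is polychromatic if every hyperedge
   contains vertices of both colors *)
Definition polychromatic (m : nat) (phi : vert -> bool) : Prop :=
  forall e, hyperedge m e ->
    (exists2 u, u \in e & phi u = true) /\ (exists2 v, v \in e & phi v = false).

From mathcomp Require Import all_boot.

Set Implicit Arguments.
Unset Strict Implicit.
Unset Printing Implicit Defensive.

(* Suppose phi is polychromatic.  A stage with N * m vertices splits into N
   stage-hyperedges, each containing a red vertex, so it has at least N red
   vertices; choosing N of them as S' yields a stage T(S') all of whose
   vertices have only red proper ancestors.  Starting from the roots and
   iterating up to level m - 1 gives a stage of m vertices with this property.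
   It is itself a stage-hyperedge, so it contains a red vertex, and the
   root-to-leaf path ending there is entirely red. *)

Lemma count_ge_blocks (p : pred nat) (m q : nat) :
  (forall i, i < q -> has p (iota (i * m) m)) -> q <= count p (iota 0 (q * m)).
Proof.
elim: q => [|q IHq] // blocks.
rewrite mulSn addnC iotaD count_cat add0n -addn1 leq_add //.
  by apply: IHq => i lt_iq; apply: blocks; apply: ltnW.
by rewrite -has_count; apply: blocks.
Qed.

Lemma root_pathE (v : vert) : root_path v = v :: behead (root_path v).
Proof.
by case: v => s k; case/lastP: s => [|s A] //; rewrite /root_path /= rev_rcons /= rev_cons revK.
Qed.

Lemma root_path_rcons (s : stage_code) (A : seq nat) (k : nat) :
  behead (root_path (rcons s A, k)) = root_path (s, nth 0 A k).
Proof. by rewrite /root_path /= rev_rcons. Qed.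

Lemma valid_stage_rcons (m : nat) (s : stage_code) (A : seq nat) :
    valid_stage m s -> size s < m.-1 -> sorted ltn A ->
    all (fun a => a < m ^ (m - size s)) A -> size A = m ^ (m - (size s).+1) ->
  valid_stage m (rcons s A).
Proof.
case/andP=> _ /allP valid_s lt_s_m sorted_A bounded_A size_A.
rewrite /valid_stage size_rcons lt_s_m; apply/allP => i.
rewrite mem_iota add0n ltnS nth_rcons; case: ltngtP => [lt_is | // | ->] _.
  by apply: valid_s; rewrite mem_iota.
by rewrite sorted_A bounded_A size_A eqxx.
Qed.

Section PolychromaticColoring.

Variables (m : nat) (phi : vert -> bool).
Hypothesis poly : polychromatic m phi.

Lemma has_red_block (s : stage_code) (i : nat) :
  valid_stage m s -> i + m <= m ^ (m - size s) ->
  has (fun k => phi (s, k)) (iota i m).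
Proof.
move=> valid_s fit.
have /poly[[u /mapP[a a_in ->] red_u] _] :
    hyperedge m [seq (s, i + a) | a <- iota 0 m] by left; exists s, i.
apply/hasP; exists (i + a) => //.
by move: a_in; rewrite !mem_iota leq_addr ltn_add2l.
Qed.

Lemma leaf_path_not_red (v : vert) :
  vertex m v -> size v.1 = m.-1 -> ~~ all phi (root_path v).
Proof.
move=> vertex_v leaf_v.
have /poly[_ [w w_in blue_w]] : hyperedge m (root_path v) by right; exists v.
by apply/allPn; exists w; rewrite ?blue_w.
Qed.

Definition red_ancestry (s : stage_code) : Prop :=
  forall k, k < m ^ (m - size s) -> all phi (behead (root_path (s, k))).

Lemma red_ancestry_extend (s : stage_code) :
    valid_stage m s -> size s < m.-1 -> red_ancestry s ->
  exists A, valid_stage m (rcons s A) /\ red_ancestry (rcons s A).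
Proof.
move=> valid_s lt_s_m red_s.
set N := m ^ (m - (size s).+1).
set R := [seq k <- iota 0 (m ^ (m - size s)) | phi (s, k)].
have size_s : m ^ (m - size s) = N * m.
  by rewrite -expnSr subnSK // (leq_trans lt_s_m) ?leq_pred.
have N_le_R : N <= size R.
  rewrite size_filter size_s; apply: count_ge_blocks => i lt_iN.
  by apply: has_red_block; rewrite // size_s -mulSnr leq_mul2r lt_iN orbT.
have R_red a : a \in R -> phi (s, a) && (a < m ^ (m - size s)).
  by rewrite mem_filter mem_iota.
exists (take N R); split.
  apply: valid_stage_rcons; rewrite ?size_takel //.
    by rewrite take_sorted // sorted_filter ?iota_ltn_sorted //; apply: ltn_trans.
  by apply/allP => a /mem_take /R_red /andP[].
move=> k; rewrite size_rcons -/N => lt_kN.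
rewrite root_path_rcons root_pathE /=.
have /R_red /andP[-> ?] : nth 0 (take N R) k \in R.
  by apply/(mem_take (n0 := N))/mem_nth; rewrite size_takel.
exact: red_s.
Qed.

Lemma red_ancestry_stage (j : nat) :
  j <= m.-1 -> exists s, [/\ valid_stage m s, size s = j & red_ancestry s].
Proof.
elim: j => [|j IHj] lt_j_m; first by exists [::].
have [s [valid_s size_s red_s]] := IHj (ltnW lt_j_m).
rewrite -size_s in lt_j_m *.
have [A [valid_sA red_sA]] := red_ancestry_extend valid_s lt_j_m red_s.
by exists (rcons s A); rewrite size_rcons.
Qed.

End PolychromaticColoring.

Theorem theorem9 (m : nat) : 0 < m -> forall phi : vert -> bool, ~ polychromatic m phi.
Proof.
move=> m_gt0 phi poly.
have [s [valid_s leaf_s red_s]] := red_ancestry_stage poly (leqnn m.-1).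
have size_s : m ^ (m - size s) = m.
  by rewrite leaf_s -subn1 subKn // expn1.
have /hasP[k k_in red_k] : has (fun k => phi (s, k)) (iota 0 m).
  by apply: has_red_block; rewrite ?size_s.
have lt_km : k < m ^ (m - size s) by move: k_in; rewrite mem_iota size_s.
have vertex_sk : vertex m (s, k) by rewrite /vertex valid_s.
have /negP[] := leaf_path_not_red poly vertex_sk leaf_s.
by rewrite root_pathE /= red_k red_s.
Qed.
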